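(* Let $r\geq 1$, let $\mathbf a=(a_1,\ldots,a_r)$ be positive integers, let $D$ be a positive common multiple of $a_1,\ldots,a_r$, and let $\sigma=a_1+\cdots+a_r$. Then for every integer $n\geq 0$, $$ (r-1)!\,p_{\mathbf a}(n) = \sum_{j= \lceil \frac{n+\sigma}{D} \rceil - r}^{\lfloor n/D\rfloor} (j+1)(j+2)\cdots (j+r-1)\, f_{\mathbf a}(n-jD). $$
   Context: $p_{\mathbf a}(n)$ is the number of integer solutions $(x_1,\ldots,x_r)$ of $a_1x_1+\cdots+a_rx_r=n$ with all $x_i\geq 0$. For every integer $m\geq 0$, $f_{\mathbf a}(m)$ denotes the number of integer tuples $(j_1,\ldots,j_r)$ with $a_1j_1+\cdots+a_rj_r=m$ and $0\leq j_k\leq \frac{D}{a_k}-1$ for $1\leq k\leq r$ (so $f_{\mathbf a}(m)=0$ for $m> rD-\sigma$). *)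

From mathcomp Require Import all_boot all_order all_algebra.
Set Implicit Arguments. Unset Strict Implicit. Unset Printing Implicit Defensive.
Import Order.TTheory GRing.Theory Num.Theory.

Definition sigma_a (r : nat) (a : 'I_r -> nat) : nat := (\sum_(i < r) a i)%N.

(* p_a(n): number of (x_1,...,x_r) in N^r with sum a_i x_i = n.
   Since every a_i >= 1 (standing hypothesis), every solution has x_i <= n,
   so the solutions are exactly counted among functions 'I_r -> 'I_(n+1). *)
Definition p_a (r : nat) (a : 'I_r -> nat) (n : nat) : nat :=
  #|[set x : {ffun 'I_r -> 'I_n.+1} | (\sum_(i < r) a i * x i)%N == n]|.

(* f_a(m): number of (j_1,...,j_r) with sum a_k j_k = m and 0 <= j_k <= D/a_k - 1.
   Since D/a_k - 1 < D, such tuples are counted among functions 'I_r -> 'I_D. *)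
Definition f_a (r : nat) (a : 'I_r -> nat) (D m : nat) : nat :=
  #|[set j : {ffun 'I_r -> 'I_D} |
      [forall k, (j k < D %/ a k)%N] && ((\sum_(k < r) a k * j k)%N == m)]|.

From mathcomp Require Import all_boot all_order all_algebra.
From mathcomp Require Import zify ring.
Set Implicit Arguments. Unset Strict Implicit. Unset Printing Implicit Defensive.
Import Order.TTheory GRing.Theory Num.Theory.
Local Open Scope ring_scope.

(* Work with polynomials truncated above degree n.  Since
   (sum_(k < D/a_i) x^(a_i k)) * (sum_(l <= n) x^(D l)) = sum_(k < (n+1) D/a_i) x^(a_i k),
   the product over i of the left-hand sides agrees with prod_i 1/(1 - x^(a_i)),
   the generating function of p_a, up to degree n.  The first factors multiply
   to the generating polynomial of f_a, and by the hockey-stick identity the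
   coefficient of x^(q D) in (sum_(l <= n) x^(D l))^r is C(q+r-1, r-1) for q <= n.
   Hence p_a(n) = sum_(q <= n/D) C(q+r-1, r-1) f_a(n - q D), and
   (r-1)! C(q+r-1, r-1) = (q+1)...(q+r-1).  The summation range of the theorem
   differs from 0 <= j <= n/D only by indices with -r < j < 0, where the
   product vanishes, and indices with n - j D > r D - sigma, where f_a vanishes. *)

Lemma hockey_stick q r : (\sum_(j < q.+1) 'C(j + r, r))%N = 'C(q + r.+1, r.+1).
Proof.
elim: q => [|q IHq]; first by rewrite big_ord1 !add0n !binn.
by rewrite big_ord_recr /= IHq [in RHS]addSn binS addSnnS.
Qed.

Lemma bin_mul_fact q r : ('C(q + r, r) * r`!)%N = (\prod_(1 <= i < r.+1) (q + i))%N.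
Proof.
rewrite bin_ffact ffact_prod big_add1 /= big_mkord (reindex_inj rev_ord_inj) /=.
by apply: eq_bigr => i _; rewrite -addnBA ?leq_subr // subKn.
Qed.

Lemma prod_rising_eq0 (j : int) r : - r%:Z < j < 0 -> \prod_(1 <= i < r) (j + i%:Z) = 0.
Proof.
move=> /andP[gt_j lt_j0]; apply/eqP; rewrite prodf_seq_eq0; apply/hasP.
exists `|j|%N; first by rewrite mem_index_iota; lia.
by apply/eqP; lia.
Qed.

Lemma sum_nat_widenl0 (V : nmodType) m n (F : nat -> V) :
  (forall t, (t < m)%N -> F t = 0) -> \sum_(m <= t < n) F t = \sum_(0 <= t < n) F t.
Proof.
move=> F0; rewrite (@big_nat_widenl _ _ _ m 0) // big_mkcond /=.
by apply: eq_bigr => t _; case: leqP => // /F0.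
Qed.

Section GeometricPolynomials.
Variable R : comNzRingType.
Implicit Types (F H : {poly R}) (a d D N n : nat).

Definition geom a N : {poly R} := \sum_(0 <= k < N) 'X^(a * k).

Lemma coef_prod_sumXn (r N : nat) (P : 'I_r -> pred 'I_N) (E : 'I_r -> 'I_N -> nat) n :
  (\prod_(i < r) \sum_(k : 'I_N) (P i k)%:R *: 'X^(E i k))`_n =
  #|[set x : {ffun 'I_r -> 'I_N} |
      [forall i, P i (x i)] && ((\sum_i E i (x i))%N == n)]|%:R :> R.
Proof.
rewrite bigA_distr_bigA /=.
have monomial_prod (x : {ffun 'I_r -> 'I_N}) :
    \prod_i ((P i (x i))%:R *: 'X^(E i (x i))) =
    ([forall i, P i (x i)] : nat)%:R *: 'X^(\sum_i E i (x i)) :> {poly R}.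
  rewrite scaler_prod -natr_prod -(big_morph _ (exprD 'X) (expr0 'X)).
  congr (_%:R *: _); case: (boolP [forall i, _]) => [/forallP Pall | /forallPn[i nPi]].
    by rewrite big1 // => i _; rewrite Pall.
  by rewrite (bigD1 i) //= (negbTE nPi).
rewrite (eq_bigr _ (fun x _ => monomial_prod x)) coef_sumMXn -sum1_card natr_sum.
rewrite big_mkcond [RHS]big_mkcond; apply: eq_bigr => x _.
by rewrite inE; case: (_ == n); case: [forall i, _]; rewrite ?andbF.
Qed.

Lemma geom_widen a N M : (N <= M)%N ->
  geom a N = \sum_(k < M) (k < N)%N%:R *: 'X^(a * k).
Proof.
move=> leNM; rewrite /geom -(big_mkord xpredT (fun k => (k < N)%N%:R *: 'X^(a * k))).
rewrite (big_cat_nat (leq0n N) leNM) /= [X in _ = _ + X]big_nat_cond.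
rewrite [X in _ = _ + X]big1 ?addr0 => [|k /andP[/andP[leNk _] _]]; last first.
  by rewrite ltnNge leNk scale0r.
rewrite big_nat_cond [RHS]big_nat_cond.
by apply: eq_bigr => k /andP[/andP[_ ->] _]; rewrite scale1r.
Qed.

Lemma coef_prod_geom_p_a r (a : 'I_r -> nat) n :
  (\prod_(i < r) geom (a i) n.+1)`_n = (p_a a n)%:R.
Proof.
under eq_bigr do rewrite (geom_widen _ (leqnn n.+1)).
rewrite coef_prod_sumXn; congr (_%:R); apply: eq_card => x.
by rewrite !inE; apply/andb_idl => _; apply/forallP => i.
Qed.

Lemma coef_prod_geom_f_a r (a : 'I_r -> nat) D m :
  (\prod_(i < r) geom (a i) (D %/ a i))`_m = (f_a a D m)%:R.
Proof.
under eq_bigr do rewrite (geom_widen _ (leq_div D _)).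
by rewrite coef_prod_sumXn.
Qed.

Lemma geom_cat a N M : (N <= M)%N ->
  geom a M = geom a N + 'X^(a * N) * geom a (M - N).
Proof.
move=> leNM; rewrite /geom (big_cat_nat (leq0n N) leNM) /=; congr (_ + _).
rewrite -{1}(add0n N) big_addn mulr_sumr; apply: eq_bigr => k _.
by rewrite -exprD mulnDr addnC.
Qed.

Lemma geomM a d L : geom a d * geom (a * d) L = geom a (d * L).
Proof.
elim: L => [|L IHL]; first by rewrite /geom muln0 !(big_geq (leqnn 0)) mulr0.
have geomS : geom (a * d) L.+1 = geom (a * d) L + 'X^(a * d * L).
  by rewrite /geom big_nat_recr.
rewrite geomS mulrDr {}IHL mulnSr (@geom_cat a (d * L) (d * L + d)) ?leq_addr //.
by rewrite addKn mulrC mulnA.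
Qed.

Lemma coef_prod_addXn (I : finType) (S T : I -> {poly R}) (N : I -> nat) n :
  (forall i, n < N i)%N ->
  (\prod_i (S i + 'X^(N i) * T i))`_n = (\prod_i S i)`_n.
Proof.
move=> ltnN.
have [U ->] : exists U, \prod_i (S i + 'X^(N i) * T i) = \prod_i S i + 'X^(n.+1) * U.
  apply: (big_rec2 (fun p q => exists U, p = q + 'X^(n.+1) * U)).
    by exists 0; rewrite mulr0 addr0.
  move=> i p q _ [U ->]; rewrite -(subnKC (ltnN i)) exprD.
  by exists (S i * U + 'X^(N i - n.+1) * T i * (q + 'X^(n.+1) * U)); ring.
by rewrite coefD coefXnM ltnSn addr0.
Qed.

Lemma coef_prod_geom_wide r (a M : 'I_r -> nat) n :
  (forall i, 0 < a i)%N -> (forall i, n < M i)%N ->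
  (\prod_(i < r) geom (a i) (M i))`_n = (\prod_(i < r) geom (a i) n.+1)`_n.
Proof.
move=> a_gt0 ltnM; under eq_bigr do rewrite (@geom_cat _ n.+1) ?ltnM //.
by rewrite coef_prod_addXn // => i; rewrite leq_pmull.
Qed.

Lemma coef_mul_comp_Xn F H D n : (0 < D)%N ->
  (F * (H \Po 'X^D))`_n = \sum_(q < (n %/ D).+1) H`_q * F`_(n - q * D).
Proof.
move=> D_gt0; set K := (n %/ D).+1.
rewrite -{1}[H](poly_take_drop K) comp_polyD comp_polyM comp_Xn_poly -exprM.
rewrite mulrDr coefD mulrA coefMXn ifT ?addr0; last by rewrite mulnC -ltn_divLR.
rewrite /take_poly poly_def raddf_sum mulr_sumr coef_sum; apply: eq_bigr => q _ /=.
rewrite comp_polyZ comp_Xn_poly -exprM -scalerAr coefZ coefMXn mulnC ifN //.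
by rewrite -leqNgt -leq_divRL // -ltnS.
Qed.

Lemma geom1_comp N D : geom 1 N \Po 'X^D = geom D N.
Proof.
rewrite /geom raddf_sum; apply: eq_bigr => k _ /=.
by rewrite comp_Xn_poly -exprM mul1n.
Qed.

Lemma coef_geom1_exp N r q : (q < N)%N ->
  (geom 1 N ^+ r.+1)`_q = 'C(q + r, r)%:R.
Proof.
have -> : geom 1 N = \poly_(i < N) 1.
  by rewrite poly_def /geom big_mkord; apply: eq_bigr => i _; rewrite scale1r mul1n.
elim: r q => [|r IHr] q ltqN; first by rewrite expr1 coef_poly ltqN addn0 bin0.
rewrite exprS mulrC coefM.
rewrite (eq_bigr (fun j : 'I_q.+1 => 'C(j + r, r)%:R)) => [|j _].
  by rewrite -natr_sum hockey_stick addnS.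
have ltjN : (j < N)%N by apply: leq_ltn_trans ltqN; rewrite -ltnS.
by rewrite IHr // coef_poly (leq_ltn_trans (leq_subr j q)) // mulr1.
Qed.

End GeometricPolynomials.

Lemma p_a_sum_bin_f_a r (a : 'I_r -> nat) D n :
  (0 < r)%N -> (forall i, 0 < a i)%N -> (0 < D)%N -> (forall i, a i %| D)%N ->
  p_a a n = (\sum_(q < (n %/ D).+1) 'C(q + r.-1, r.-1) * f_a a D (n - q * D))%N.
Proof.
move=> r_gt0 a_gt0 D_gt0 aD; apply/eqP; rewrite -(eqr_nat int) natr_sum.
have D_wide i : (n < D %/ a i * n.+1)%N by rewrite leq_pmull // divn_gt0 // dvdn_leq.
rewrite -coef_prod_geom_p_a -(coef_prod_geom_wide _ a_gt0 D_wide).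
have -> : \prod_(i < r) geom int (a i) (D %/ a i * n.+1) =
          \prod_(i < r) geom int (a i) (D %/ a i) * (geom int 1 n.+1 ^+ r \Po 'X^D).
  under eq_bigr do rewrite -geomM mulnC divnK //.
  by rewrite big_split /= prodr_const card_ord rmorphXn /= geom1_comp.
rewrite coef_mul_comp_Xn //; apply/eqP/eq_bigr => q _.
have ltqn : (q < n.+1)%N by rewrite (leq_trans (ltn_ord q)) // ltnS leq_div.
by rewrite -{1}(prednK r_gt0) coef_geom1_exp // coef_prod_geom_f_a natrM.
Qed.

Lemma f_a_eq0 r (a : 'I_r -> nat) D m : (r * D < m + sigma_a a)%N -> f_a a D m = 0%N.
Proof.
move=> large_m; apply/eqP; rewrite cards_eq0; apply/eqP/setP => j; rewrite !inE.
apply/negP => /andP[/forallP small_j /eqP sum_j].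
have : (\sum_(k < r) (a k * j k + a k) <= \sum_(k < r) D)%N.
  apply: leq_sum => k _; rewrite -mulnSr mulnC.
  by apply: leq_trans (leq_trunc_div D (a k)); rewrite leq_mul2r small_j orbT.
by rewrite big_split /= sum_j sum_nat_const card_ord leqNgt large_m.
Qed.

Lemma sigma_a_gt0 r (a : 'I_r -> nat) : (0 < r)%N -> (forall i, 0 < a i)%N ->
  (0 < sigma_a a)%N.
Proof. by move=> r_gt0 a_gt0; rewrite /sigma_a (bigD1 (Ordinal r_gt0)) // ltn_addr. Qed.

Lemma sigma_a_leq r (a : 'I_r -> nat) D : (forall i, a i <= D)%N ->
  (sigma_a a <= r * D)%N.
Proof.
move=> le_aD; apply: (@leq_trans (\sum_(i < r) D)); first exact: leq_sum.
by rewrite sum_nat_const card_ord.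
Qed.

Section Summand.
Variables (r : nat) (a : 'I_r -> nat) (D n : nat).

Definition summand (t : nat) : int :=
  let j : int := t%:Z - r%:Z in
  (\prod_(1 <= i < r) (j + i%:Z)) * (f_a a D (absz (n%:Z - j * D%:Z)%R))%:Z.

Lemma summand_eq0_jneg t : (0 < t < r)%N -> summand t = 0.
Proof. by move=> t_bounds; rewrite /summand prod_rising_eq0 ?mul0r //; lia. Qed.

Lemma summand_eq0_f_a t : (sigma_a a <= r * D)%N -> (t * D < n + sigma_a a)%N ->
  summand t = 0.
Proof.
move=> sigma_le lt_tD; rewrite /summand f_a_eq0 ?mulr0 //.
have -> : absz (n%:Z - (t%:Z - r%:Z) * D%:Z)%R = (n + r * D - t * D)%N by lia.
lia.
Qed.

Lemma summand_addr q : (q * D <= n)%N -> (0 < r)%N ->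
  summand (q + r) = ((r.-1)`! * ('C(q + r.-1, r.-1) * f_a a D (n - q * D)))%:Z.
Proof.
move=> le_qD r_gt0; rewrite /summand PoszD addrK.
have -> : absz (n%:Z - q%:Z * D%:Z)%R = (n - q * D)%N by lia.
rewrite mulnA [((r.-1)`! * _)%N]mulnC bin_mul_fact prednK // PoszM.
congr (_ * _); rewrite -[in RHS]natz natr_prod.
by apply: eq_bigr => i _; rewrite natz PoszD.
Qed.

End Summand.

Theorem corollary2p3 (r : nat) (hr : (1 <= r)%N) (a : 'I_r -> nat)
    (ha : forall i, (0 < a i)%N) (D : nat) (hD : (0 < D)%N)
    (hdiv : forall i, (a i %| D)%N) (n : nat) :
  let c := ((n + sigma_a a + D - 1) %/ D)%N in
  ((r.-1)`!)%:Z * (p_a a n)%:Z =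
  \sum_(0 <= k < (n %/ D + r + 1 - c)%N)
     let j : int := (c + k)%:Z - r%:Z in
     (\prod_(1 <= i < r) (j + i%:Z)) * (f_a a D (absz (n%:Z - j * D%:Z)%R))%:Z.
Proof.
move=> c; set U := (n %/ D + r + 1)%N.
have sigma_gt0 := sigma_a_gt0 hr ha.
have sigma_le : (sigma_a a <= r * D)%N by apply: sigma_a_leq => i; apply: dvdn_leq.
have lt_c t : (t < c)%N = (t * D < n + sigma_a a)%N.
  by rewrite /c leq_divRL // mulSn; lia.
have c_gt0 : (0 < c)%N by rewrite lt_c; lia.
transitivity (\sum_(c <= t < U) summand a D n t); last first.
  by rewrite -{1}(add0n c) big_addn; apply: eq_bigr => k _; rewrite addnC.
rewrite sum_nat_widenl0 => [|t]; last by rewrite lt_c; apply: summand_eq0_f_a.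
rewrite -(@sum_nat_widenl0 _ r) => [|t lt_tr]; last first.
  case: (ltnP t c) => [|le_ct]; first by rewrite lt_c; apply: summand_eq0_f_a.
  by apply: summand_eq0_jneg; rewrite lt_tr (leq_trans c_gt0 le_ct).
have := big_addn 0 U r (fun _ => true) (summand a D n); rewrite add0n => ->.
rewrite (_ : U - r = (n %/ D).+1)%N; last by rewrite /U addnAC addnK addn1.
rewrite (p_a_sum_bin_f_a n hr ha hD hdiv) -PoszM big_distrr /= big_mkord.
rewrite -[LHS]natz natr_sum; apply: eq_bigr => q _.
by rewrite natz summand_addr // -leq_divRL // -ltnS.
Qed.
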